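(* Consider the unbounded variant of the reserve price problem with $n=2$ samples, $d=2$ features and $X=\mathbb{R}^2$: $\max_{\beta\in\mathbb{R}^2}\frac12\sum_{i=1}^2 r(w^i\cdot\beta;b_i^{(1)},b_i^{(2)})$. There exists a sequence of such instances in which all problem data ($w^1,w^2\in\mathbb{R}^2$ with $\|w^1\|_2,\|w^2\|_2\le 1$, and bids $b_i^{(1)},b_i^{(2)}\in[0,1]$) are bounded in magnitude by one, each instance has a unique optimal solution $\beta^*$, and $\|\beta^*\|$ grows arbitrarily large along the sequence.
   Context: The reward function is $r(v;b^{(1)},b^{(2)})=b^{(2)}$ if $v\le b^{(2)}$, $=v$ if $b^{(2)}<v\le b^{(1)}$, and $=0$ if $v>b^{(1)}$, for bids $b^{(1)}\ge b^{(2)}\ge0$. *)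

From Stdlib Require Import Reals.
Open Scope R_scope.

(* Reward r(v; b1, b2) for bids b1 >= b2 >= 0. *)
Definition reward (v b1 b2 : R) : R :=
  if Rle_dec v b2 then b2 else if Rle_dec v b1 then v else 0.

Definition dot2 (x y : R * R) : R := fst x * fst y + snd x * snd y.

Definition norm2 (x : R * R) : R := sqrt (dot2 x x).

Definition objective (w1 w2 : R * R) (b11 b12 b21 b22 : R) (beta : R * R) : R :=
  / 2 * (reward (dot2 w1 beta) b11 b12 + reward (dot2 w2 beta) b21 b22).

Definition is_optimal (w1 w2 : R * R) (b11 b12 b21 b22 : R) (beta : R * R) : Prop :=
  forall gamma : R * R,
    objective w1 w2 b11 b12 b21 b22 gamma <= objective w1 w2 b11 b12 b21 b22 beta.

(* If every low bid is strictly below its high bid, then r(v; b1, b2) <= b1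
   with equality exactly at v = b1.  So whenever some beta prices both samples
   at their high bids, the optimal solutions are precisely those beta, i.e. the
   solutions of a linear system.  With w1 = (1, 0), w2 = (0, e) and high bids 1
   the unique solution is (1, 1/e), whose norm blows up as e -> 0. *)
From Stdlib Require Import Reals Lra.
Open Scope R_scope.

Lemma reward_le_high (v b1 b2 : R) : 0 <= b2 <= b1 -> reward v b1 b2 <= b1.
Proof.
  intros Hb; unfold reward.
  destruct (Rle_dec v b2); [lra|]; destruct (Rle_dec v b1); lra.
Qed.

Lemma reward_at_high (b1 b2 : R) : b2 < b1 -> reward b1 b1 b2 = b1.
Proof.
  intros Hb; unfold reward.
  destruct (Rle_dec b1 b2); [lra|]; destruct (Rle_dec b1 b1); lra.
Qed.

Lemma reward_eq_high (v b1 b2 : R) :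
  0 <= b2 < b1 -> b1 <= reward v b1 b2 -> v = b1.
Proof.
  intros Hb; unfold reward.
  destruct (Rle_dec v b2); [lra|]; destruct (Rle_dec v b1); lra.
Qed.

Lemma is_optimal_iff_high_bids (w1 w2 : R * R) (b11 b12 b21 b22 : R) :
  0 <= b12 < b11 -> 0 <= b22 < b21 ->
  (exists gamma, dot2 w1 gamma = b11 /\ dot2 w2 gamma = b21) ->
  forall beta, is_optimal w1 w2 b11 b12 b21 b22 beta <->
               dot2 w1 beta = b11 /\ dot2 w2 beta = b21.
Proof.
  intros Hb1 Hb2 [gamma [Hg1 Hg2]] beta.
  assert (Hupper : forall g, objective w1 w2 b11 b12 b21 b22 g <= / 2 * (b11 + b21)).
  { intros g; unfold objective.
    pose proof (reward_le_high (dot2 w1 g) b11 b12).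
    pose proof (reward_le_high (dot2 w2 g) b21 b22); lra. }
  assert (Hattain : forall g, dot2 w1 g = b11 -> dot2 w2 g = b21 ->
                    objective w1 w2 b11 b12 b21 b22 g = / 2 * (b11 + b21)).
  { intros g H1 H2; unfold objective.
    rewrite H1, H2, !reward_at_high by lra; reflexivity. }
  split.
  - intros Hopt; specialize (Hopt gamma).
    rewrite (Hattain gamma Hg1 Hg2) in Hopt; unfold objective in Hopt.
    pose proof (reward_le_high (dot2 w1 beta) b11 b12).
    pose proof (reward_le_high (dot2 w2 beta) b21 b22).
    split; eapply reward_eq_high; eauto; lra.
  - intros [H1 H2] g; rewrite (Hattain beta H1 H2); apply Hupper.
Qed.

Lemma norm2_fst_axis (a : R) : 0 <= a -> norm2 (a, 0) = a.
Proof.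
  intros Ha; unfold norm2, dot2; simpl.
  replace (a * a + 0 * 0) with (a * a) by ring; apply sqrt_square; exact Ha.
Qed.

Lemma norm2_snd_axis (a : R) : 0 <= a -> norm2 (0, a) = a.
Proof.
  intros Ha; unfold norm2, dot2; simpl.
  replace (0 * 0 + a * a) with (a * a) by ring; apply sqrt_square; exact Ha.
Qed.

Lemma norm2_ge_snd (x : R * R) : 0 <= snd x -> snd x <= norm2 x.
Proof.
  destruct x as [x1 x2]; simpl; intros Hx2; unfold norm2, dot2; simpl.
  rewrite <- (sqrt_square x2) at 1 by exact Hx2.
  apply sqrt_le_1_alt; nra.
Qed.

Theorem proposition4 :
  forall M : R,
  exists (w1 w2 : R * R) (b11 b12 b21 b22 : R) (beta_star : R * R),
    norm2 w1 <= 1 /\ norm2 w2 <= 1 /\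
    0 <= b12 <= b11 /\ b11 <= 1 /\
    0 <= b22 <= b21 /\ b21 <= 1 /\
    is_optimal w1 w2 b11 b12 b21 b22 beta_star /\
    (forall beta : R * R, is_optimal w1 w2 b11 b12 b21 b22 beta -> beta = beta_star) /\
    M < norm2 beta_star.
Proof.
  intros M.
  set (L := Rabs M + 1).
  assert (HL : 1 <= L) by (pose proof (Rabs_pos M); unfold L; lra).
  assert (HinvL : 0 < / L <= 1).
  { split; [apply Rinv_0_lt_compat; lra|].
    rewrite <- Rinv_1; apply Rinv_le_contravar; lra. }
  assert (Hsystem : forall beta, dot2 (1, 0) beta = 1 /\ dot2 (0, / L) beta = 1
                                 <-> beta = (1, L)).
  { intros [x y]; unfold dot2; simpl; split.
    - intros [Hx Hy]; f_equal; [lra|].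
      apply (Rmult_eq_reg_l (/ L)); [|lra]; rewrite Rinv_l; lra.
    - intros Hxy; injection Hxy as -> ->; rewrite Rinv_l; lra. }
  pose proof (is_optimal_iff_high_bids (1, 0) (0, / L) 1 0 1 0 ltac:(lra) ltac:(lra)
                (ex_intro _ (1, L) (proj2 (Hsystem (1, L)) eq_refl))) as Hopt.
  exists (1, 0), (0, / L), 1, 0, 1, 0, (1, L).
  repeat split; try lra.
  - rewrite norm2_fst_axis; lra.
  - rewrite norm2_snd_axis; lra.
  - apply Hopt, Hsystem; reflexivity.
  - intros beta Hbeta; apply Hsystem, Hopt, Hbeta.
  - apply Rlt_le_trans with L; [pose proof (Rle_abs M); unfold L; lra|].
    apply (norm2_ge_snd (1, L)); simpl; lra.
Qed.
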